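(* Let $A\in\mathbb{R}^{N\times N}$, $B\in\mathbb{R}^{N\times m}$, $C\in\mathbb{R}^{p\times N}$, $D\in\mathbb{R}^{p\times m}$ with all eigenvalues of $A$ having negative real part. Let $\mathcal{W}:=L^2(-\infty,0;\mathbb{R}^m)$, $\mathcal{Y}:=L^2(0,\infty;\mathbb{R}^p)$ with standard inner products, and let $\mathcal{H}\colon\mathcal{W}\to\mathcal{Y}$, $(\mathcal{H}u)(t)=\int_{-\infty}^0 h(t-s)u(s)\,\mathrm{d}s$ with $h(t)=Ce^{tA}B+D\delta(t)$, have singular value decomposition $\mathcal{H}=\sum_{i=1}^N\sigma_i\langle\cdot,f_i\rangle_{\mathcal{W}}\,g_i$ with orthonormal $\{f_i\}\subset\mathcal{W}$, orthonormal $\{g_i\}\subset\mathcal{Y}$, $\sigma_1\ge\dots\ge\sigma_N\ge0$ (and $\sigma_{N+1}:=0$). Let $\mathbb{W}$ be the closed unit ball of $\mathcal{W}$. Then for $n=1,\dots,N$, the subspace $\widehat{\mathcal{W}}_n=\operatorname{span}\{f_1,\dots,f_n\}$ is an $n$-dimensional active subspace of $\mathcal{H}$ on $\mathbb{W}$, and the corresponding worst-case error is $$\sup_{w\in\mathbb{W}}\|\mathcal{H}(w)-\mathcal{H}(\pi_{\widehat{\mathcal{W}}_n}w)\|_{\mathcal{Y}}=\inf_{\mathcal{W}_n\le\mathcal{W},\,\dim\mathcal{W}_n\le n}\ \sup_{w\in\mathbb{W}}\|\mathcal{H}(w)-\mathcal{H}(\pi_{\mathcal{W}_n}w)\|_{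\mathcal{Y}}=\sigma_{n+1}.$$
   Context: An $n$-dimensional subspace $\widehat{\mathcal{W}}_n\le\mathcal{W}$ is called an active subspace of an operator $\mathcal{S}\colon\mathcal{W}\to\mathcal{Y}$ on a set $\mathbb{W}\subseteq\mathcal{W}$ if $\sup_{w\in\mathbb{W}}\|\mathcal{S}(w)-\mathcal{S}(\pi_{\widehat{\mathcal{W}}_n}w)\|=\inf_{\mathcal{W}_n\le\mathcal{W},\,\dim\mathcal{W}_n\le n}\sup_{w\in\mathbb{W}}\|\mathcal{S}(w)-\mathcal{S}(\pi_{\mathcal{W}_n}w)\|$, where $\pi_{\mathcal{W}_n}$ denotes the orthogonal projection onto $\mathcal{W}_n$. *)

From mathcomp Require Import all_boot all_order all_algebra.
From mathcomp Require Import all_classical all_reals all_analysis.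
From mathcomp Require Import complex.

Set Implicit Arguments.
Unset Strict Implicit.
Unset Printing Implicit Defensive.

Import Order.TTheory GRing.Theory Num.Theory.
Local Open Scope ring_scope.
Local Open Scope classical_set_scope.

Section Defs.
Variable R : realType.

Definition hurwitz (N : nat) (A : 'M[R]_N) : Prop :=
  forall z : R[i], eigenvalue (map_mx (real_complex R) A) z -> complex.Re z < 0.

Definition expm (N : nat) (A : 'M[R]_N) : 'M[R]_N :=
  limn (fun n : nat => \sum_(k < n) ((k`!)%:R^-1 *: A ^+ k)).

Definition Wdom : set R := `]-oo, 0]%classic.
Definition Ydom : set R := `[0, +oo[%classic.

Definition L2on (I : set R) (k : nat) (u : R -> 'cV[R]_k) : Prop :=
  (forall i : 'I_k, measurable_fun I (fun t => u t i 0)) /\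
  lebesgue_measure.-integrable I (fun t => (\sum_(i < k) (u t i 0) ^+ 2)%:E).

Definition ip (I : set R) (k : nat) (u v : R -> 'cV[R]_k) : R :=
  Rintegral lebesgue_measure I (fun t => \sum_(i < k) u t i 0 * v t i 0).

Definition l2norm (I : set R) (k : nat) (u : R -> 'cV[R]_k) : R :=
  Num.sqrt (ip I u u).

(** The Hankel operator (H u)(t) = int_{-oo}^0 C e^{(t-s)A} B u(s) ds, t >= 0.
    (The feedthrough term D delta(t-s) contributes only at t = s = 0, a
    Lebesgue-null set of t, hence vanishes as an element of Y.) *)
Definition hankel (N m p : nat) (A : 'M[R]_N) (B : 'M[R]_(N, m))
  (C : 'M[R]_(p, N)) (u : R -> 'cV[R]_m) : R -> 'cV[R]_p :=
  fun t => \col_(i < p)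
    Rintegral lebesgue_measure Wdom
      (fun s => (C *m expm ((t - s) *: A) *m B *m u s) i 0).

Definition spanfun (n k : nat) (v : 'I_n -> R -> 'cV[R]_k) (c : 'I_n -> R)
  : R -> 'cV[R]_k :=
  fun t => \sum_(i < n) c i *: v i t.

Definition is_orth_proj (I : set R) (n k : nat) (v : 'I_n -> R -> 'cV[R]_k)
  (w q : R -> 'cV[R]_k) : Prop :=
  (exists c : 'I_n -> R, q = spanfun v c) /\
  (forall i : 'I_n, ip I (w \- q) (v i) = 0).

(** Worst-case error sup_{w in unit ball of W} || H w - H (pi_{span v} w) ||_Y
    for the subspace span{v_i} of W (every subspace of dimension <= n is of
    this form). *)
Definition wc_err (N m p : nat) (A : 'M[R]_N) (B : 'M[R]_(N, m))
  (C : 'M[R]_(p, N)) (n : nat) (v : 'I_n -> R -> 'cV[R]_m) : \bar R :=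
  ereal_sup [set x : \bar R | exists w q : R -> 'cV[R]_m,
    [/\ L2on Wdom w, l2norm Wdom w <= 1, is_orth_proj Wdom v w q &
        x = (l2norm Ydom (hankel A B C w \- hankel A B C q))%:E]].

End Defs.
Arguments Wdom {R}.
Arguments Ydom {R}.

From mathcomp Require Import all_boot all_order all_algebra.
From mathcomp Require Import all_classical all_reals all_analysis.
From mathcomp Require Import complex.
From mathcomp Require Import lra measurable_realfun.
Import Order.TTheory GRing.Theory Num.Theory.
Local Open Scope ring_scope.
Local Open Scope classical_set_scope.

(* In the orthonormal bases (f_i) and (g_i) the operator is diagonal, so
   ||H w - H q||^2 = sum_i sigma_i^2 <w - q, f_i>^2  (indices start at 0).
   If q is the projection of w onto span {f_0, ..., f_(n-1)}, only the terms
   with i >= n survive and Bessel's inequality bounds the error by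
   sigma_n ||w||.  Conversely, n functions v_i impose only n linear conditions
   on the (n+1)-dimensional span of f_0, ..., f_n, which therefore contains a
   unit vector orthogonal to every v_i: its projection onto span v is 0 and
   its error is at least sigma_n. *)

Section ae_eq_integral_nonmeasurable.
Local Open Scope ereal_scope.
Context d (T : measurableType d) (R : realType) (mu : {measure set T -> \bar R}).

Lemma ge0_le_integral_nonmeasurable (D : set T) (f1 f2 : T -> \bar R) :
  (forall x, D x -> 0 <= f1 x) -> (forall x, D x -> f1 x <= f2 x) ->
  \int[mu]_(x in D) f1 x <= \int[mu]_(x in D) f2 x.
Proof.
move=> f10 f12.
have f20 x : D x -> 0 <= f2 x by move=> Dx; exact: le_trans (f10 x Dx) (f12 x Dx).
rewrite (ge0_integralE _ f10) (ge0_integralE _ f20).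
apply: ereal_sup_le => _ [h hf1 <-]; exists h => // x.
apply: le_trans (hf1 x) _; rewrite /patch; case: ifP => // /set_mem Dx.
exact: f12.
Qed.

(* Unlike [ge0_ae_eq_integral], [f] need not be measurable: its integral is
   squeezed between those of the modifications of [g] by 0 and by +oo on the
   null set. *)
Lemma ge0_ae_eq_integral_nonmeasurable (D : set T) (f g : T -> \bar R) :
  measurable D -> measurable_fun D g ->
  (forall x, D x -> 0 <= f x) -> (forall x, D x -> 0 <= g x) ->
  ae_eq mu D f g -> \int[mu]_(x in D) f x = \int[mu]_(x in D) g x.
Proof.
move=> mD mg f0 g0 [N [mN N0 fg]].
have fgN x : D x -> x \notin N -> f x = g x.
  move=> Dx /negP xN; apply: contrapT => fgx; apply: xN; apply: mem_set.
  by apply: fg => /(_ Dx).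
pose gN c x := if x \in N then c else g x.
have gNE c : 0 <= c -> \int[mu]_(x in D) gN c x = \int[mu]_(x in D) g x.
  move=> c0; apply: ge0_ae_eq_integral => //.
  - apply: measurable_fun_if => //; last exact: measurable_funS mg.
    apply: (measurable_fun_bool true).
    rewrite [X in measurable X](_ : _ = D `&` N); first exact: measurableI.
    apply/seteqP; split=> x [Dx /= xN]; split=> //.
      exact: set_mem.
    exact: mem_set.
  - by move=> x Dx; rewrite /gN; case: ifP => _; [exact: c0|exact: g0].
  - exists N; split => // x /= /not_implyP[Dx]; rewrite /gN.
    by case: ifP => [/set_mem //|_ []].
apply/eqP; rewrite eq_le; apply/andP; split.
  rewrite -(gNE +oo) //; apply: ge0_le_integral_nonmeasurable => // x Dx.
  by rewrite /gN; case: ifPn => [_|/(fgN x Dx)->]; rewrite ?leey.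
rewrite -(gNE 0) //; apply: ge0_le_integral_nonmeasurable => x Dx.
  by rewrite /gN; case: ifP => _; [exact: lexx|exact: g0].
by rewrite /gN; case: ifPn => [_|/(fgN x Dx)->]; [exact: f0|exact: lexx].
Qed.

End ae_eq_integral_nonmeasurable.

Section L2.
Context {R : realType} {I : set R} (mI : measurable I) {k : nat}.
Notation mu := (@lebesgue_measure R).
Implicit Types u v w : R -> 'cV[R]_k.

Let pr u v t := \sum_(i < k) u t i 0 * v t i 0.

Let pr_ge0 u t : 0 <= pr u u t.
Proof. by apply: sumr_ge0 => i _; rewrite -expr2 sqr_ge0. Qed.

Lemma measurable_pr u v : L2on I u -> L2on I v -> measurable_fun I (pr u v).
Proof.
by move=> [mu1 _] [mv _]; apply: measurable_sum => i; exact: measurable_funM.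
Qed.

Lemma integrable_pr u v : L2on I u -> L2on I v ->
  mu.-integrable I (EFin \o pr u v).
Proof.
move=> hu hv; have [_ iu] := hu; have [_ iv] := hv.
pose bound t :=
  ((\sum_(i < k) u t i 0 ^+ 2)%:E + (\sum_(i < k) v t i 0 ^+ 2)%:E)%E.
apply: (@le_integrable _ _ _ mu I mI _ bound); last exact: integrableD.
  by apply/measurable_EFinP; exact: measurable_pr.
move=> t It; rewrite /bound /= lee_fin (ger0_norm (x := _ + _)); last first.
  by apply: addr_ge0; apply: sumr_ge0 => i _; exact: sqr_ge0.
rewrite -big_split /=; apply: le_trans (ler_norm_sum _ _ _) _.
apply: ler_sum => i _; move: (u t i 0) (v t i 0) => a b.
by rewrite ler_norml; apply/andP; split; nra.
Qed.

Lemma L2on0 : L2on I (fun=> (0 : 'cV[R]_k)).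
Proof.
split=> [i|]; first by under eq_fun do rewrite mxE; exact: measurable_cst.
apply: (eq_integrable _ (cst 0%E)) => //; last exact: integrable0.
by move=> t _ /=; rewrite big1 // => i _; rewrite mxE expr0n.
Qed.

Lemma L2onZ a u : L2on I u -> L2on I (fun t => a *: u t).
Proof.
move=> [mu1 iu]; split=> [i|].
  by under eq_fun do rewrite mxE; exact: measurable_funM.
pose bound t := ((a ^+ 2)%:E * (\sum_(i < k) u t i 0 ^+ 2)%:E)%E.
apply: (@eq_integrable _ _ _ mu I mI bound).
  move=> t _; rewrite /bound -EFinM mulr_sumr; congr EFin.
  by apply: eq_bigr => i _; rewrite mxE exprMn.
exact: integrableZl.
Qed.

Lemma L2onD u v : L2on I u -> L2on I v -> L2on I (u \+ v).
Proof.
move=> [mu1 iu] [mv iv].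
have muv i : measurable_fun I (fun t => (u \+ v) t i 0).
  by under eq_fun do rewrite mxE; exact: measurable_funD.
split=> //.
pose bound t := (2%:E * (\sum_(i < k) u t i 0 ^+ 2)%:E
                 + 2%:E * (\sum_(i < k) v t i 0 ^+ 2)%:E)%E.
have ib : mu.-integrable I bound by apply: integrableD => //; exact: integrableZl.
apply: (@le_integrable _ _ _ mu I mI _ bound); last exact: ib.
- apply/measurable_EFinP; apply: measurable_sum => i.
  by apply: measurable_funX; exact: muv.
- move=> t It /=; rewrite lee_fin ger0_norm; last first.
    by apply: sumr_ge0 => i _; exact: sqr_ge0.
  rewrite ger0_norm; last by apply: addr_ge0; apply: mulr_ge0 => //;
    apply: sumr_ge0 => i _; exact: sqr_ge0.
  rewrite !mulr_sumr -big_split /=; apply: ler_sum => i _.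
  by rewrite mxE; move: (u t i 0) (v t i 0) => a b; have := sqr_ge0 (a - b); nra.
Qed.

Lemma L2onB u v : L2on I u -> L2on I v -> L2on I (u \- v).
Proof.
move=> hu hv; rewrite (_ : u \- v = u \+ (fun t => -1 *: v t)).
  exact/L2onD/L2onZ.
by apply/funext => t /=; rewrite scaleN1r.
Qed.

Lemma L2on_sum (J : Type) (r : seq J) (F : J -> R -> 'cV[R]_k) :
  (forall j, L2on I (F j)) -> L2on I (fun t => \sum_(j <- r) F j t).
Proof.
move=> hF; elim: r => [|j r IH].
  by under eq_fun do rewrite big_nil; exact: L2on0.
by under eq_fun do rewrite big_cons; exact: L2onD.
Qed.

Lemma L2on_spanfun {n} (phi : 'I_n -> R -> 'cV[R]_k) c :
  (forall i, L2on I (phi i)) -> L2on I (spanfun phi c).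
Proof. by move=> hphi; apply: L2on_sum => i; exact: L2onZ. Qed.

Lemma ipC u v : ip I u v = ip I v u.
Proof. by apply: eq_Rintegral => t _; apply: eq_bigr => i _; rewrite mulrC. Qed.

Lemma ip0l w : ip I (fun=> (0 : 'cV[R]_k)) w = 0.
Proof.
rewrite /ip (@eq_Rintegral _ _ _ mu I (cst 0)) ?Rintegral_cst ?mul0r //.
by move=> t _; rewrite big1 // => i _; rewrite mxE mul0r.
Qed.

Lemma ipDl u v w : L2on I u -> L2on I v -> L2on I w ->
  ip I (u \+ v) w = ip I u w + ip I v w.
Proof.
move=> hu hv hw; rewrite /ip -RintegralD //; try exact: integrable_pr.
apply: eq_Rintegral => t _; rewrite -big_split.
by apply: eq_bigr => i _; rewrite mxE mulrDl.
Qed.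

Lemma ipZl a u w : L2on I u -> L2on I w ->
  ip I (fun t => a *: u t) w = a * ip I u w.
Proof.
move=> hu hw; rewrite /ip -RintegralZl //; last exact: integrable_pr.
apply: eq_Rintegral => t _; rewrite mulr_sumr.
by apply: eq_bigr => i _; rewrite mxE mulrA.
Qed.

Lemma ipBl u v w : L2on I u -> L2on I v -> L2on I w ->
  ip I (u \- v) w = ip I u w - ip I v w.
Proof.
move=> hu hv hw; rewrite (_ : u \- v = u \+ (fun t => -1 *: v t)).
  by rewrite ipDl ?ipZl ?mulN1r //; exact: L2onZ.
by apply/funext => t /=; rewrite scaleN1r.
Qed.

Lemma ip_suml (J : Type) (r : seq J) (F : J -> R -> 'cV[R]_k) w :
  (forall j, L2on I (F j)) -> L2on I w ->
  ip I (fun t => \sum_(j <- r) F j t) w = \sum_(j <- r) ip I (F j) w.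
Proof.
move=> hF hw; elim: r => [|j r IH].
  by under eq_fun do rewrite big_nil; rewrite ip0l big_nil.
under eq_fun do rewrite big_cons.
by rewrite ipDl ?big_cons ?IH //; exact: L2on_sum.
Qed.

Lemma ip_spanfunl {n} (phi : 'I_n -> R -> 'cV[R]_k) c w :
  (forall i, L2on I (phi i)) -> L2on I w ->
  ip I (spanfun phi c) w = \sum_i c i * ip I (phi i) w.
Proof.
move=> hphi hw; rewrite /spanfun ip_suml //; last by move=> i; exact: L2onZ.
by apply: eq_bigr => i _; rewrite ipZl.
Qed.

Lemma ip_ge0 u : 0 <= ip I u u.
Proof. by apply: Rintegral_ge0 => t _; exact: pr_ge0. Qed.

Lemma l2norm_le1 u : (l2norm I u <= 1) = (ip I u u <= 1).
Proof. by rewrite /l2norm -{1}sqrtr1 ler_sqrt. Qed.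

Lemma ip_self_ae_eq u v : L2on I v -> u = v %[ae mu in I] ->
  ip I u u = ip I v v.
Proof.
move=> hv uv; rewrite /ip /Rintegral; congr fine.
apply: ge0_ae_eq_integral_nonmeasurable => //.
- by apply/measurable_EFinP; exact: measurable_pr.
- by move=> t _; rewrite lee_fin; exact: pr_ge0.
- by move=> t _; rewrite lee_fin; exact: pr_ge0.
- exact: (ae_eq_comp (fun x : 'cV[R]_k => (\sum_(i < k) x i 0 * x i 0)%:E) uv).
Qed.

Section orthonormal.
Context {n : nat} (phi : 'I_n -> R -> 'cV[R]_k).
Hypothesis phi_L2 : forall i, L2on I (phi i).
Hypothesis phi_orthonormal : forall i j, ip I (phi i) (phi j) = (i == j)%:R.

Lemma ip_spanfun_orthonormal c j : ip I (spanfun phi c) (phi j) = c j.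
Proof.
rewrite ip_spanfunl // (bigD1 j) //= phi_orthonormal eqxx mulr1 big1 ?addr0 //.
by move=> i /negPf ij; rewrite phi_orthonormal ij mulr0.
Qed.

Lemma ip_spanfun_spanfun c c' :
  ip I (spanfun phi c) (spanfun phi c') = \sum_i c i * c' i.
Proof.
rewrite ip_spanfunl //; last exact: L2on_spanfun.
by apply: eq_bigr => i _; rewrite ipC ip_spanfun_orthonormal.
Qed.

Lemma bessel w : L2on I w -> \sum_i ip I w (phi i) ^+ 2 <= ip I w w.
Proof.
move=> hw; pose P := spanfun phi (fun i => ip I w (phi i)).
have LP : L2on I P by exact: L2on_spanfun.
have ePw : ip I P w = \sum_i ip I w (phi i) ^+ 2.
  by rewrite ip_spanfunl //; apply: eq_bigr => i _; rewrite ipC expr2.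
have ePP : ip I P P = \sum_i ip I w (phi i) ^+ 2.
  by rewrite ip_spanfun_spanfun; apply: eq_bigr => i _; rewrite expr2.
have LwP : L2on I (w \- P) by exact: L2onB.
have := ip_ge0 (w \- P).
rewrite ipBl // ![ip I _ (w \- P)]ipC !ipBl // [ip I w P]ipC ePw ePP.
lra.
Qed.

Lemma spanfun_ae_eq0 c :
  spanfun phi c = (fun=> 0) %[ae mu in I] -> forall i, c i = 0.
Proof.
move=> c0 i; have := ip_self_ae_eq _ _ L2on0 c0.
rewrite ip0l ip_spanfun_spanfun => cc0.
have /psumr_eq0P cc : \sum_j c j ^+ 2 = 0.
  by apply: eq_trans cc0; apply: eq_bigr => j _; rewrite expr2.
by apply/eqP; rewrite -sqrf_eq0 cc // => j _; exact: sqr_ge0.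
Qed.

End orthonormal.

End L2.

Lemma left_kernel_unit_vector {R : rcfType} {n : nat} (M : 'M[R]_(n.+1, n)) :
  exists e : 'I_n.+1 -> R,
    \sum_j e j ^+ 2 = 1 /\ forall i, \sum_j e j * M j i = 0.
Proof.
have /rowV0Pn[d /sub_kermxP dM d0] : kermx M != 0.
  by rewrite -mxrank_eq0 mxrank_ker subn_eq0 -ltnNge ltnS rank_leq_col.
pose r := \sum_j d 0 j ^+ 2.
have r_gt0 : 0 < r.
  rewrite lt_def sumr_ge0 ?andbT => [|j _]; last exact: sqr_ge0.
  apply: contra d0 => /eqP /psumr_eq0P d2; apply/eqP/rowP => j.
  by rewrite mxE; apply/eqP; rewrite -sqrf_eq0 d2 // => i _; exact: sqr_ge0.
exists (fun j => d 0 j / Num.sqrt r); split.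
  under eq_bigr do rewrite expr_div_n.
  by rewrite -mulr_suml sqr_sqrtr ?ltW // divff // gt_eqF.
move=> i; have := congr1 (fun X : 'rV_n => X 0 i) dM; rewrite !mxE => dMi.
by under eq_bigr do rewrite mulrAC; rewrite -mulr_suml dMi mul0r.
Qed.

(* [wc_err A B C] is [worst_case_error Wdom Ydom (hankel A B C)] by definition. *)
Definition worst_case_error {R : realType} (W Y : set R) {m p n : nat}
    (H : (R -> 'cV[R]_m) -> R -> 'cV[R]_p) (v : 'I_n -> R -> 'cV[R]_m) : \bar R :=
  ereal_sup [set x : \bar R | exists w q : R -> 'cV[R]_m,
    [/\ L2on W w, l2norm W w <= 1, is_orth_proj W v w q &
        x = (l2norm Y (H w \- H q))%:E]].

Section finite_rank_operator.
Context {R : realType} {W Y : set R} (mW : measurable W) (mY : measurable Y).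
Context {N m p : nat} {H : (R -> 'cV[R]_m) -> R -> 'cV[R]_p}.
Context {sigma : nat -> R} {f : nat -> R -> 'cV[R]_m} {g : nat -> R -> 'cV[R]_p}.
Hypothesis f_L2 : forall i, (i < N)%N -> L2on W (f i).
Hypothesis g_L2 : forall i, (i < N)%N -> L2on Y (g i).
Hypothesis f_orthonormal :
  forall i j, (i < N)%N -> (j < N)%N -> ip W (f i) (f j) = (i == j)%:R.
Hypothesis g_orthonormal :
  forall i j, (i < N)%N -> (j < N)%N -> ip Y (g i) (g j) = (i == j)%:R.
Hypothesis sigma_nonincreasing :
  forall i j, (i <= j)%N -> (j < N)%N -> sigma j <= sigma i.
Hypothesis sigma_ge0 : forall i, (i < N)%N -> 0 <= sigma i.
Hypothesis H_svd : forall u, L2on W u ->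
  H u = (fun t => \sum_(i < N) (sigma i * ip W u (f i)) *: g i t)
        %[ae lebesgue_measure in Y].

Section first_vectors.
Context {n : nat} (n_le_N : (n <= N)%N).

Lemma f_ord_L2 (i : 'I_n) : L2on W (f i).
Proof. by apply: f_L2; exact: leq_trans (ltn_ord i) n_le_N. Qed.

Lemma f_ord_orthonormal (i j : 'I_n) : ip W (f i) (f j) = (i == j)%:R.
Proof. by rewrite f_orthonormal //; exact: leq_trans (ltn_ord _) n_le_N. Qed.

Lemma ip_spanf_out (c : 'I_n -> R) k : (n <= k < N)%N ->
  ip W (spanfun (fun i : 'I_n => f i) c) (f k) = 0.
Proof.
case/andP=> nk kN; rewrite ip_spanfunl //; [|exact: f_ord_L2|exact: f_L2].
apply: big1 => i _; have ik : (i < k)%N := leq_trans (ltn_ord i) nk.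
by rewrite f_orthonormal ?(ltn_eqF ik) ?mulr0 // (ltn_trans ik kN).
Qed.

End first_vectors.

Lemma sqnorm_H_sub w q : L2on W w -> L2on W q ->
  ip Y (H w \- H q) (H w \- H q)
  = \sum_(i < N) (sigma i * (ip W w (f i) - ip W q (f i))) ^+ 2.
Proof.
move=> hw hq.
pose gN (i : 'I_N) := g i; pose x i := sigma i * (ip W w (f i) - ip W q (f i)).
have gN_L2 i : L2on Y (gN i) by exact: g_L2.
have gN_orthonormal i j : ip Y (gN i) (gN j) = (i == j)%:R.
  exact: g_orthonormal.
have Hwq : H w \- H q = spanfun gN x %[ae lebesgue_measure in Y].
  move: (H_svd _ hw) (H_svd _ hq).
  apply: (filterS2 (ae_filter_ringOfSetsType lebesgue_measure)) => t Hw Hq Yt.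
  rewrite /= Hw // Hq // -sumrB; apply: eq_bigr => i _.
  by rewrite -scalerBl -mulrBr.
rewrite (ip_self_ae_eq mY _ _ _ Hwq); last exact: L2on_spanfun.
by rewrite ip_spanfun_spanfun //; apply: eq_bigr => i _; rewrite expr2.
Qed.

Let sv n := if (n < N)%N then sigma n else 0.

Let sv_ge0 n : 0 <= sv n.
Proof. by rewrite /sv; case: ifP => // /sigma_ge0. Qed.

Lemma proj_error_sq_le n w q : (n <= N)%N -> L2on W w -> ip W w w <= 1 ->
  is_orth_proj W (fun i : 'I_n => f i) w q ->
  ip Y (H w \- H q) (H w \- H q) <= sv n ^+ 2.
Proof.
move=> nN hw w1 [[c ->] qo]; have hq := L2on_spanfun mW _ c (f_ord_L2 nN).
rewrite sqnorm_H_sub //.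
apply: (@le_trans _ _ (\sum_(i < N) (sv n * ip W w (f i)) ^+ 2)).
  apply: ler_sum => i _; have iN := ltn_ord i; case: (ltnP i n) => [ilt|nle].
    have := qo (Ordinal ilt); rewrite ipBl //; last exact: f_L2.
    by move=> /= ->; rewrite mulr0 expr0n sqr_ge0.
  have nN' : (n < N)%N := leq_ltn_trans nle iN.
  rewrite ip_spanf_out ?nle // subr0 /sv nN' !exprMn.
  rewrite ler_wpM2r ?sqr_ge0 // ler_pXn2r ?nnegrE ?sigma_ge0 //.
  exact: sigma_nonincreasing.
under eq_bigr do rewrite exprMn.
rewrite -mulr_sumr -[leRHS]mulr1 ler_wpM2l ?sqr_ge0 //.
apply: le_trans w1.
exact: (bessel mW _ (f_ord_L2 (leqnn N)) (f_ord_orthonormal (leqnn N)) _ hw).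
Qed.

Lemma worst_case_error_f_le n : (n <= N)%N ->
  (worst_case_error W Y H (fun i : 'I_n => f i) <= (sv n)%:E)%E.
Proof.
move=> nN; apply: ge_ereal_sup => _ [w [q [hw w1 hq ->]]].
rewrite lee_fin -(ger0_norm (sv_ge0 n)) -sqrtr_sqr ler_wsqrtr //.
by apply: proj_error_sq_le => //; rewrite -l2norm_le1.
Qed.

Lemma sigma_sq_le_sqnorm_H_span n (e : 'I_n.+1 -> R) : (n < N)%N ->
  \sum_j e j ^+ 2 = 1 ->
  sigma n ^+ 2
  <= \sum_(i < N)
       (sigma i * ip W (spanfun (fun j : 'I_n.+1 => f j) e) (f i)) ^+ 2.
Proof.
move=> nN e1; set w := spanfun _ e.
apply: (@le_trans _ _ (\sum_(j < n.+1) (sigma j * ip W w (f j)) ^+ 2)).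
  rewrite -[leLHS]mulr1 -e1 mulr_sumr; apply: ler_sum => j _.
  have jn : (j <= n)%N := ltn_ord j.
  rewrite ip_spanfun_orthonormal ?exprMn;
    [|exact: mW|exact: f_ord_L2|exact: f_ord_orthonormal].
  rewrite ler_wpM2r ?sqr_ge0 // ler_pXn2r ?nnegrE ?sigma_ge0 //.
  rewrite sigma_nonincreasing //.
  exact: leq_ltn_trans jn nN.
rewrite (big_ord_widen N (fun i => (sigma i * ip W w (f i)) ^+ 2) nN).
rewrite big_mkcond /=.
by apply: ler_sum => i _; case: ifP => _ //; exact: sqr_ge0.
Qed.

Lemma sv_le_worst_case_error n (v : 'I_n -> R -> 'cV[R]_m) :
  (forall i, L2on W (v i)) -> ((sv n)%:E <= worst_case_error W Y H v)%E.
Proof.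
move=> v_L2; have L0 : L2on W (fun=> (0 : 'cV[R]_m)) by exact: L2on0.
have err_le w : L2on W w -> ip W w w <= 1 -> (forall i, ip W w (v i) = 0) ->
    ((l2norm Y (H w \- H (fun=> 0)))%:E <= worst_case_error W Y H v)%E.
  move=> hw w1 wv; apply: ereal_sup_ubound; exists w, (fun=> 0).
  split; rewrite ?l2norm_le1 //; split.
    exists (fun=> 0); apply/funext => t.
    by rewrite /spanfun big1 // => i _; rewrite scale0r.
  by move=> i; rewrite ipBl ?ip0l ?subr0.
case: (ltnP n N) => [nN|Nn]; last first.
  have := err_le _ L0; rewrite (ip0l mW) => /(_ ler01 (fun i => ip0l mW _)).
  by apply: le_trans; rewrite /sv ltnNge Nn lee_fin sqrtr_ge0.
have [e [e1 eM]] :=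
  left_kernel_unit_vector (\matrix_(j < n.+1, i < n) ip W (f j) (v i)).
pose w := spanfun (fun j : 'I_n.+1 => f j) e.
have fS_L2 := f_ord_L2 nN; have fS_orthonormal := f_ord_orthonormal nN.
have hw : L2on W w by exact: L2on_spanfun.
have ww : ip W w w = 1.
  by rewrite ip_spanfun_spanfun // -e1; apply: eq_bigr => j _; rewrite expr2.
apply: le_trans (err_le w hw _ _); last 2 first.
- by rewrite ww.
- move=> i; rewrite ip_spanfunl //; apply: eq_trans (eM i).
  by apply: eq_bigr => j _; rewrite mxE.
rewrite lee_fin /l2norm sqnorm_H_sub // /sv nN.
rewrite -(ger0_norm (sigma_ge0 _ nN)) -sqrtr_sqr ler_wsqrtr //.
under eq_bigr do rewrite (ip0l mW) subr0.
exact: sigma_sq_le_sqnorm_H_span.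
Qed.

Lemma worst_case_error_f n : (n <= N)%N ->
  worst_case_error W Y H (fun i : 'I_n => f i) = (sv n)%:E.
Proof.
move=> nN; apply/eqP; rewrite eq_le worst_case_error_f_le //=.
by apply: sv_le_worst_case_error; exact: f_ord_L2.
Qed.

Lemma worst_case_error_f_min n : (n <= N)%N ->
  worst_case_error W Y H (fun i : 'I_n => f i)
  = ereal_inf [set worst_case_error W Y H v | v in
                 [set v : 'I_n -> R -> 'cV[R]_m | forall i, L2on W (v i)]].
Proof.
move=> nN; apply/eqP; rewrite eq_le; apply/andP; split.
  rewrite worst_case_error_f //; apply: le_ereal_inf_tmp => _ [v v_L2 <-].
  exact: sv_le_worst_case_error.
by apply: ereal_inf_lbound; exists (fun i : 'I_n => f i) => //; exact: f_ord_L2.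
Qed.

End finite_rank_operator.

Theorem theorem4p1 (R : realType) (N m p : nat)
  (A : 'M[R]_N) (B : 'M[R]_(N, m)) (C : 'M[R]_(p, N)) (D : 'M[R]_(p, m))
  (sigma : nat -> R) (f : nat -> R -> 'cV[R]_m) (g : nat -> R -> 'cV[R]_p) :
  hurwitz A ->
  (forall i, (i < N)%N -> L2on Wdom (f i)) ->
  (forall i, (i < N)%N -> L2on Ydom (g i)) ->
  (forall i j, (i < N)%N -> (j < N)%N -> ip Wdom (f i) (f j) = (i == j)%:R) ->
  (forall i j, (i < N)%N -> (j < N)%N -> ip Ydom (g i) (g j) = (i == j)%:R) ->
  (forall i j, (i <= j)%N -> (j < N)%N -> sigma j <= sigma i) ->
  (forall i, (i < N)%N -> 0 <= sigma i) ->
  (forall u, L2on Wdom u ->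
     hankel A B C u
     = (fun t => \sum_(i < N) (sigma i * ip Wdom u (f i)) *: g i t)
       %[ae lebesgue_measure in Ydom]) ->
  forall n : nat, (1 <= n <= N)%N ->
    [/\ (forall c : 'I_n -> R,
           spanfun (fun i : 'I_n => f i) c = (fun=> 0) %[ae lebesgue_measure in Wdom] ->
           forall i, c i = 0),
        wc_err A B C (fun i : 'I_n => f i)
        = ereal_inf [set wc_err A B C v | v in
                       [set v : 'I_n -> R -> 'cV[R]_m | forall i, L2on Wdom (v i)]]
      & wc_err A B C (fun i : 'I_n => f i)
        = (if (n < N)%N then sigma n else 0)%:E].
Proof.
(* Stability of [A] only guarantees that the singular value decomposition
   exists; here the decomposition itself is a hypothesis. *)
move=> _ f_L2 g_L2 f_orth g_orth sigma_noninc sigma_ge0 H_svd n /andP[_ nN].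
have mW : measurable (@Wdom R) by exact: measurable_itv.
have mY : measurable (@Ydom R) by exact: measurable_itv.
split.
- exact: (spanfun_ae_eq0 mW (fun i : 'I_n => f i)
            (f_ord_L2 f_L2 nN) (f_ord_orthonormal f_orth nN)).
- exact (worst_case_error_f_min mW mY f_L2 g_L2 f_orth g_orth
           sigma_noninc sigma_ge0 H_svd n nN).
- exact (worst_case_error_f mW mY f_L2 g_L2 f_orth g_orth
           sigma_noninc sigma_ge0 H_svd n nN).
Qed.
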